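(* Suppose $\mathcal I_{CAS}=\langle\mathcal I,\chi\rangle$ and $\mathcal I'_{CAS}=\langle\mathcal I',\chi'\rangle$ are NI-congruent justified CAS-models of a DL-Lite$_R$ DKB $\mathcal K$. Then $\chi'\not\subset\chi$.
   Context: DL-Lite$_R$: pairwise disjoint countably infinite sets $\mathrm{NC}$, $\mathrm{NR}$, $\mathrm{NI}$; a role is $R$ or $R^-$; concepts $C ::= A\mid\exists R$ (left), $D ::= A\mid\neg C\mid\exists R$ (right). Axioms: $C\sqsubseteq D$, $S\sqsubseteq R$, $\mathrm{Dis}(R,S)$, $\mathrm{Inv}(R,S)$, $\mathrm{Irr}(R)$ (no reflexivity), assertions $D(a)$, $R(a,b)$, usual semantics. Standard name assumption: an infinite set $\mathrm{NI}_S\subseteq\mathrm{NI}$ of standard names is the domain of every interpretation, $c^{\mathcal I}=c$ for $c\in\mathrm{NI}_S$. Axioms are identified with universal first-order sentences $\forall\vec x\,\phi_\alpha(\vec x)$ via the standard translation with right-hand existentials Skolemized by a unary Skolem function $f_R$ per atomic role; $\alpha(\vec e):=\phi_\alpha(\vec e)$. A DKB is a finite set of DL-Lite$_R$ axioms and defeasible axioms $\mathrm D(\alpha)$. Clashing assumption $\langle\alpha,\vec e\rangle$; clashing set: satisfiable set $S$ of assertions and negated assertions with $S\cup\{\alpha(\vec e)\}$ unsatisfiable. $\langle\mathcal I,\chi\rangle$ is a CAS-model of $\mathcal K$ if $\mathcal I$ satisfies the non-defeasible axioms and $\mathcal I\models\phi_\alpha(\vec d)$ for all $\mathrm D(\alpha)\in\mathcal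 K$ and tuples $\vec d$ with $\langle\alpha,\vec d\rangle\notin\chi$. Two (CAS-)interpretations are NI-congruent if they interpret every $c\in\mathrm{NI}$ identically. $\langle\alpha,\vec e\rangle\in\chi$ is justified if some clashing set for it holds in every CAS-model $\langle\mathcal I'',\chi\rangle$ of $\mathcal K$ NI-congruent to $\langle\mathcal I,\chi\rangle$; a CAS-model is justified if all its clashing assumptions are justified. *)

From Stdlib Require Import List Arith.
Import ListNotations.
Set Implicit Arguments.

(* Concept names NC := nat, role names NR := nat.
   Individual names NI := standard names NI_S (= nat) + non-standard names X.
   The domain of every interpretation is NI_S = nat. *)

Inductive role : Type := RN (r : nat) | RInv (r : nat).

Inductive lconcept : Type := CA (a : nat) | CEx (R : role).

Inductive rconcept : Type := DA (a : nat) | DNeg (C : lconcept) | DEx (R : role).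

Inductive indiv (X : Type) : Type := Std (n : nat) | NStd (x : X).
Arguments Std {X} n.
Arguments NStd {X} x.

Inductive axiom (X : Type) : Type :=
  | CIncl (C : lconcept) (D : rconcept)
  | RIncl (S R : role)
  | Dis (R S : role)
  | Inv (R S : role)
  | Irr (R : role)
  | CAss (D : rconcept) (a : indiv X)
  | RAss (r : nat) (a b : indiv X).
Arguments CIncl {X} C D.
Arguments RIncl {X} S R.
Arguments Dis {X} R S.
Arguments Inv {X} R S.
Arguments Irr {X} R.

(* Interpretations: domain nat (= NI_S), standard names interpreted as
   themselves; Skolem functions f_R for every (possibly inverse) role;
   non-standard names mapped into the domain. *)
Record interp (X : Type) : Type := {
  i_conc : nat -> nat -> Prop;
  i_role : nat -> nat -> nat -> Prop;
  i_sk   : role -> nat -> nat;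
  i_ind  : X -> nat
}.

Section Sem.
Variable X : Type.
Variable I : interp X.

Definition ival (a : indiv X) : nat :=
  match a with Std n => n | NStd x => i_ind I x end.

Definition rsem (R : role) (x y : nat) : Prop :=
  match R with RN r => i_role I r x y | RInv r => i_role I r y x end.

Definition lsem (C : lconcept) (x : nat) : Prop :=
  match C with CA a => i_conc I a x | CEx R => exists y, rsem R x y end.

Definition rcsem (D : rconcept) (x : nat) : Prop :=
  match D with
  | DA a => i_conc I a x
  | DNeg C => ~ lsem C x
  | DEx R => exists y, rsem R x y
  end.

(* number of universally quantified variables introduced by the
   (prenex) standard translation *)
Definition lvars (C : lconcept) : nat := match C with CA _ => 0 | CEx _ => 1 end.
Definition rvars (D : rconcept) : nat :=
  match D with DNeg (CEx _) => 1 | _ => 0 end.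

Definition arity (al : axiom X) : nat :=
  match al with
  | CIncl C D => 1 + lvars C + rvars D
  | RIncl _ _ | Dis _ _ | Inv _ _ => 2
  | Irr _ => 1
  | CAss D _ => rvars D
  | RAss _ _ _ => 0
  end.

(* Skolemized right-hand side, with x the subject and z the extra universal
   variable coming from a right-hand ~exists S *)
Definition rhs (D : rconcept) (x z : nat) : Prop :=
  match D with
  | DA b => i_conc I b x
  | DEx R => rsem R x (i_sk I R x)
  | DNeg (CA b) => ~ i_conc I b x
  | DNeg (CEx Q) => ~ rsem Q x z
  end.

(* phi_alpha(d): the matrix of the universal sentence for alpha, instantiated
   with the tuple d = (x, y, z) of its universal variables, in order *)
Definition phi (al : axiom X) (d : list nat) : Prop :=
  let v i := nth i d 0 in
  match al with
  | CIncl C D =>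
      (match C with CA a => i_conc I a (v 0) | CEx R => rsem R (v 0) (v 1) end)
      -> rhs D (v 0) (v (1 + lvars C))
  | RIncl Q R => rsem Q (v 0) (v 1) -> rsem R (v 0) (v 1)
  | Dis R Q => ~ (rsem R (v 0) (v 1) /\ rsem Q (v 0) (v 1))
  | Inv R Q => (rsem R (v 0) (v 1) <-> rsem Q (v 1) (v 0))
  | Irr R => ~ rsem R (v 0) (v 0)
  | CAss D a => rhs D (ival a) (v 0)
  | RAss r a b => i_role I r (ival a) (ival b)
  end.

Definition satisfies (al : axiom X) : Prop :=
  forall d, length d = arity al -> phi al d.

End Sem.

Record dkb (X : Type) : Type := {
  k_strict : list (axiom X);
  k_def    : list (axiom X)
}.

Record cas (X : Type) : Type := mkCA { ca_ax : axiom X; ca_tup : list nat }.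

Definition is_cas X (K : dkb X) (c : cas X) : Prop :=
  In (ca_ax c) (k_def K) /\ length (ca_tup c) = arity (ca_ax c).

Definition CAS_model X (K : dkb X) (I : interp X) (chi : cas X -> Prop) : Prop :=
  (forall c, chi c -> is_cas K c) /\
  (forall al, In al (k_strict K) -> satisfies I al) /\
  (forall al d, In al (k_def K) -> length d = arity al ->
     ~ chi (mkCA al d) -> phi I al d).

Inductive lit (X : Type) : Type :=
  | PosC (D : rconcept) (a : indiv X)
  | NegC (D : rconcept) (a : indiv X)
  | PosR (r : nat) (a b : indiv X)
  | NegR (r : nat) (a b : indiv X).

Definition lsat X (I : interp X) (l : lit X) : Prop :=
  match l with
  | PosC D a => rcsem I D (ival I a)
  | NegC D a => ~ rcsem I D (ival I a)
  | PosR r a b => i_role I r (ival I a) (ival I b)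
  | NegR r a b => ~ i_role I r (ival I a) (ival I b)
  end.

Definition set_sat X (I : interp X) (S : lit X -> Prop) : Prop :=
  forall l, S l -> lsat I l.

Definition clashing_set X (al : axiom X) (e : list nat) (S : lit X -> Prop) : Prop :=
  (exists J : interp X, set_sat J S) /\
  ~ (exists J : interp X, set_sat J S /\ phi J al e).

(* NI-congruence: standard names are always interpreted identically *)
Definition congruent X (I I' : interp X) : Prop :=
  forall x, i_ind I x = i_ind I' x.

Definition justified X (K : dkb X) (I : interp X) (chi : cas X -> Prop) : Prop :=
  forall c, chi c ->
    exists S, clashing_set (ca_ax c) (ca_tup c) S /\
      forall I'', congruent I'' I -> CAS_model K I'' chi -> set_sat I'' S.

Definition justified_model X (K : dkb X) (I : interp X) (chi : cas X -> Prop) : Prop :=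
  CAS_model K I chi /\ justified K I chi.

Definition proper_subset X (A B : cas X -> Prop) : Prop :=
  (forall c, A c -> B c) /\ exists c, B c /\ ~ A c.

Set Implicit Arguments.
Unset Strict Implicit.

(* If chi' were a proper subset of chi, then <I', chi> would itself be a
   CAS-model of K, NI-congruent to <I, chi>, since enlarging the set of
   clashing assumptions only weakens the requirements on defeasible axioms.
   Take <alpha, e> in chi but not in chi'.  Its justification in <I, chi>
   yields a clashing set satisfied by I', so alpha(e) fails in I'; but
   <alpha, e> is not an exception of chi', so the CAS-model <I', chi'>
   satisfies alpha(e). *)

Lemma congruent_sym X (I I' : interp X) : congruent I I' -> congruent I' I.
Proof. intros Hcong x. symmetry. apply Hcong. Qed.

Lemma CAS_model_superset X (K : dkb X) (I : interp X) (chi chi' : cas X -> Prop) :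
  (forall c, chi c -> is_cas K c) -> (forall c, chi' c -> chi c) ->
  CAS_model K I chi' -> CAS_model K I chi.
Proof.
  intros Hcas Hsub [_ [Hstrict Hdef]].
  split; [exact Hcas|]. split; [exact Hstrict|].
  intros al d Hin Hlen Hnchi. apply Hdef; auto.
Qed.

Lemma CAS_model_phi X (K : dkb X) (I : interp X) (chi : cas X -> Prop) (c : cas X) :
  CAS_model K I chi -> is_cas K c -> ~ chi c -> phi I (ca_ax c) (ca_tup c).
Proof.
  intros [_ [_ Hdef]] [Hin Hlen] Hnchi. destruct c as [al e].
  apply Hdef; assumption.
Qed.

Lemma justified_not_phi X (K : dkb X) (I I'' : interp X) (chi : cas X -> Prop) (c : cas X) :
  justified K I chi -> chi c -> congruent I'' I -> CAS_model K I'' chi ->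
  ~ phi I'' (ca_ax c) (ca_tup c).
Proof.
  intros Hjust Hc Hcong Hmodel Hphi.
  destruct (Hjust c Hc) as [S [[_ Hclash] Hholds]].
  apply Hclash. exists I''. split; [apply Hholds|]; assumption.
Qed.

Theorem proposition5 (X : Type)
  (HX : exists f : X -> nat, forall x y, f x = f y -> x = y)
  (K : dkb X) (I I' : interp X) (chi chi' : cas X -> Prop) :
  justified_model K I chi -> justified_model K I' chi' ->
  congruent I I' -> ~ proper_subset chi' chi.
Proof.
  intros [Hmodel Hjust] [Hmodel' _] Hcong [Hsub [c [Hc Hnc']]].
  assert (Hcas : forall c, chi c -> is_cas K c) by apply Hmodel.
  assert (Hmodel'' : CAS_model K I' chi)
    by exact (CAS_model_superset Hcas Hsub Hmodel').
  apply (justified_not_phi Hjust Hc (congruent_sym Hcong) Hmodel'').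
  exact (CAS_model_phi Hmodel' (Hcas c Hc) Hnc').
Qed.
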